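(* Assume the standing conventions of the context. Let $\Psi=\binom{a_k}{b_l}$ be a consecutive pair in $Z_{\mathrm I}$ (so $l\in\{k-1,k\}$), and suppose $\mathcal D_{Z,Z'}\neq\emptyset$. Then $(\Lambda_\Psi,Z')\in\mathcal D_{Z,Z'}$ if and only if \[ \begin{cases} c_k\geq a_k\text{ and }b_k>d_k, & \text{if $m'=m$ and $l=k$};\\ a_k>c_k\text{ and }d_{k-1}\geq b_{k-1}, & \text{if $m'=m$ and $l=k-1$};\\ c_k>a_k\text{ and }b_k\geq d_k, & \text{if $m'=m+1$ and $l=k$};\\ a_k\geq c_k\text{ and }d_{k-1}>b_{k-1}, & \text{if $m'=m+1$ and $l=k-1$}. \end{cases} \]
   Context: A symbol is an array $\Lambda=\binom{a'_1,\ldots,a'_{m_1}}{b'_1,\ldots,b'_{m_2}}$ of two strictly decreasing finite sequences of nonnegative integers (top row, bottom row); its defect is $\mathrm{def}(\Lambda)=m_1-m_2$. Standing assumptions: $Z=\binom{a_1,\ldots,a_{m+1}}{b_1,\ldots,b_m}$ is a special symbol of defect $1$, i.e. $a_1\ge b_1\ge a_2\ge b_2\ge\cdots\ge b_m\ge a_{m+1}$; $Z'=\binom{c_1,\ldots,c_{m'}}{d_1,\ldots,d_{m'}}$ is a special symbol of defect $0$, i.e. $c_1\ge d_1\ge c_2\ge d_2\ge\cdots\ge c_{m'}\ge d_{m'}$; and $m'\in\{m,m+1\}$. For a symbol $Y$, $Y_{\mathrm I}$ is the set of entries of $Y$ occurring in exactly one row. For $M\subset Z_{\mathrm I}$, $\Lambda_M$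 is the symbol obtained from $Z$ by moving every entry of $M$ to the other row (rows re-sorted decreasingly); for $N\subset Z'_{\mathrm I}$, $\Lambda_N$ is obtained from $Z'$ in the same way. $\overline{\mathcal S}_Z=\{\Lambda_M: M\subset Z_{\mathrm I}\}$, $\overline{\mathcal S}_{Z'}=\{\Lambda_N:N\subset Z'_{\mathrm I}\}$; $\mathcal S_{Z,1}$ (resp. $\mathcal S_{Z',0}$) is the set of elements of $\overline{\mathcal S}_Z$ of defect $1$ (resp. of $\overline{\mathcal S}_{Z'}$ of defect $0$). A consecutive pair in $Z'_{\mathrm I}$ is a two-element subset $\{c_k,d_l\}\subset Z'_{\mathrm I}$, written $\binom{c_k}{d_l}$, with $l\in\{k-1,k\}$; a consecutive pair in $Z_{\mathrm I}$ is $\{a_k,b_l\}\subset Z_{\mathrm I}$, written $\binom{a_k}{b_l}$, with $l\in\{k-1,k\}$. Relation $\overline{\mathcal B}^+_{Z,Z'}\subset\overline{\mathcal S}_Z\times\overline{\mathcal S}_{Z'}$: for $\Lambda=\binom{a'_1,\ldots,a'_{m_1}}{b'_1,\ldots,b'_{m_2}}\in\overline{\mathcal S}_Z$ and $\Lambda'=\binom{c'_1,\ldots,c'_{m'_1}}{d'_1,\ldots,d'_{m'_2}}\in\overline{\mathcal S}_{Z'}$, $(\Lambda,\Lambda')\in\overline{\mathcal B}^+_{Z,Z'}$ iff $\mathrm{def}(\Lambda')=1-\mathrm{def}(\Lambda)$ and: if $m'=m$, $a'_i>d'_i\ge a'_{i+1}$ for $1\le i\le m'_2$ and $b'_{i-1}>c'_i\ge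 b'_i$ for $1\le i\le m'_1$; if $m'=m+1$, $a'_i\ge d'_i>a'_{i+1}$ for $1\le i\le m'_2$ and $b'_{i-1}\ge c'_i>b'_i$ for $1\le i\le m'_1$; here $b'_0=+\infty$ and nonexistent entries $a'_j,b'_j$ beyond the row lengths are $-\infty$. Then $\mathcal D_{Z,Z'}=\overline{\mathcal B}^+_{Z,Z'}\cap(\mathcal S_{Z,1}\times\mathcal S_{Z',0})$. *)

From mathcomp Require Import all_boot all_order all_algebra.
Set Implicit Arguments. Unset Strict Implicit. Unset Printing Implicit Defensive.

(* A symbol: (top row, bottom row), each a strictly decreasing seq of nats. *)
Definition symbol := (seq nat * seq nat)%type.

Definition strict_dec (s : seq nat) : bool := sorted (fun x y => y < x) s.
Definition is_symbol (L : symbol) : Prop := strict_dec L.1 /\ strict_dec L.2.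

Definition defect (L : symbol) : int := (Posz (size L.1) - Posz (size L.2))%R.

Inductive ext := NegInf | Fin of nat | PosInf.

Definition ext_le (x y : ext) : bool :=
  match x, y with
  | NegInf, _ => true
  | _, PosInf => true
  | Fin a, Fin b => a <= b
  | _, _ => false
  end.
Definition ext_lt (x y : ext) : bool := ~~ ext_le y x.

(* 1-based entry s_i; nonexistent entries (i = 0 or i > size s) are -oo *)
Definition ent (s : seq nat) (i : nat) : ext :=
  if (0 < i) && (i <= size s) then Fin (nth 0 s i.-1) else NegInf.
(* same, but with the convention s_0 = +oo (used for b'_0) *)
Definition entb (s : seq nat) (i : nat) : ext :=
  if i == 0 then PosInf else ent s i.

(* Z_I : entries occurring in exactly one row *)
Definition inI (L : symbol) (x : nat) : bool := (x \in L.1) != (x \in L.2).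

(* Lambda_M : move every entry of M to the other row, re-sort decreasingly *)
Definition moveM (L : symbol) (M : seq nat) : symbol :=
  (sort (fun x y => y <= x)
        ([seq x <- L.1 | x \notin M] ++ [seq x <- L.2 | x \in M]),
   sort (fun x y => y <= x)
        ([seq x <- L.2 | x \notin M] ++ [seq x <- L.1 | x \in M])).

Definition Sbar (Z : symbol) (L : symbol) : Prop :=
  exists M : seq nat, all (inI Z) M /\ L = moveM Z M.

Definition Sdef (Z : symbol) (delta : int) (L : symbol) : Prop :=
  Sbar Z L /\ defect L = delta.

Definition special1 (a b : seq nat) : Prop :=
  size a = (size b).+1 /\
  forall i, i < size b -> nth 0 b i <= nth 0 a i /\ nth 0 a i.+1 <= nth 0 b i.
Definition special0 (c d : seq nat) : Prop :=
  size c = size d /\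
  forall i, i < size d ->
    nth 0 d i <= nth 0 c i /\ (i.+1 < size c -> nth 0 c i.+1 <= nth 0 d i).

(* The condition part of \bar B^+_{Z,Z'} (the defect condition is added below).
   L = (a' ; b') in \bar S_Z, L' = (c' ; d') in \bar S_{Z'}. *)
Definition Bcond (m m' : nat) (L L' : symbol) : Prop :=
  let a' := L.1 in let b' := L.2 in let c' := L'.1 in let d' := L'.2 in
  if m' == m then
    (forall i, 1 <= i <= size d' ->
        ext_lt (ent d' i) (ent a' i) && ext_le (ent a' i.+1) (ent d' i)) /\
    (forall i, 1 <= i <= size c' ->
        ext_lt (ent c' i) (entb b' i.-1) && ext_le (ent b' i) (ent c' i))
  else
    (forall i, 1 <= i <= size d' ->
        ext_le (ent d' i) (ent a' i) && ext_lt (ent a' i.+1) (ent d' i)) /\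
    (forall i, 1 <= i <= size c' ->
        ext_le (ent c' i) (entb b' i.-1) && ext_lt (ent b' i) (ent c' i)).

Definition Bbar_plus (Z Z' : symbol) (m m' : nat) (L L' : symbol) : Prop :=
  Sbar Z L /\ Sbar Z' L' /\ defect L' = (1 - defect L)%R /\ Bcond m m' L L'.

Definition Dset (Z Z' : symbol) (m m' : nat) (L L' : symbol) : Prop :=
  Bbar_plus Z Z' m m' L L' /\ Sdef Z 1 L /\ Sdef Z' 0 L'.

From mathcomp Require Import all_boot all_order all_algebra.
From mathcomp Require Import zify.
Set Implicit Arguments. Unset Strict Implicit. Unset Printing Implicit Defensive.

(* Write Z = (a; b) and Z' = (c; d).

   Step 1 (Bcond_of_Dset): (Z, Z') itself satisfies the interlacing conditions
   of \bar B^+_{Z,Z'}.  Both halves of these conditions are interlacings of two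
   decreasing rows (strict when m' = m, weak when m' = m + 1; the convention
   b'_0 = +oo is a sentinel prepended to b), and an interlacing is equivalent
   to bounds on the numbers of entries above each threshold s.  Moving entries
   between the rows of a symbol preserves these numbers for both rows together,
   and the special symbols Z, Z' interlace weakly, so a parity argument carries
   the bounds from a pair (Lambda, Lambda') in D_{Z,Z'} over to (Z, Z').
   Step 2 (moveM_pair): moving Psi simply exchanges a_k and b_l in place.
   Step 3 (swap_Bpoint): the conditions for the exchanged symbol differ from
   those for Z only around positions k and l, which leaves the stated
   inequalities; the defect and membership requirements hold automatically. *)

(* Entries [ent s i] are -oo or finite, so they are compared through the
   order embedding [rank] : -oo |-> 0, Fin n |-> n.+1. *)
Definition rank (e : ext) : nat := if e is Fin n then n.+1 else 0.

Lemma ent_cases s i : ent s i = NegInf \/ exists n, ent s i = Fin n.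
Proof. by rewrite /ent; case: ifP => _; [right; exists (nth 0 s i.-1) | left]. Qed.

Lemma ext_le_ent s i s' j :
  ext_le (ent s i) (ent s' j) = (rank (ent s i) <= rank (ent s' j)).
Proof. by case: (ent_cases s i) => [->|[n ->]]; case: (ent_cases s' j) => [->|[n' ->]]. Qed.

Lemma ext_lt_ent s i s' j :
  ext_lt (ent s i) (ent s' j) = (rank (ent s i) < rank (ent s' j)).
Proof. by rewrite /ext_lt ext_le_ent ltnNge. Qed.

Lemma ext_lt_Fin u v : ext_lt (Fin u) (Fin v) = ltn u v.
Proof. by rewrite /ext_lt /= ltnNge. Qed.

Lemma ext_le_ent_PosInf s i : ext_le (ent s i) PosInf.
Proof. by case: (ent_cases s i) => [->|[n ->]]. Qed.

Lemma ext_lt_ent_PosInf s i : ext_lt (ent s i) PosInf.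
Proof. by case: (ent_cases s i) => [->|[n ->]]. Qed.

Lemma entF s t : 0 < t <= size s -> ent s t = Fin (nth 0 s t.-1).
Proof. by rewrite /ent => ->. Qed.

Lemma ent_out s t : size s < t -> ent s t = NegInf.
Proof. by rewrite /ent => h; rewrite (leqNgt t) h andbF. Qed.

Lemma ent_nil i : ent [::] i = NegInf.
Proof. by rewrite /ent; case: i. Qed.

Lemma ent1 h t : ent (h :: t) 1 = Fin h.
Proof. by []. Qed.

Lemma ent_cons h t i : 0 < i -> ent (h :: t) i.+1 = ent t i.
Proof. by case: i. Qed.

Lemma ent_set (s : seq nat) k v t : 0 < k <= size s ->
  ent (set_nth 0 s k.-1 v) t = if t == k then Fin v else ent s t.
Proof.
case/andP => k0 ks; rewrite /ent size_set_nth prednK // (maxn_idPr ks) nth_set_nth /=.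
case: (eqVneq t k) => [->|tk]; first by rewrite k0 ks eqxx.
case: t tk => [|t] tk //=.
by rewrite -(prednK k0) eqSS in tk; rewrite (negbTE tk).
Qed.

Lemma entb_set (s : seq nat) k v t : 0 < k <= size s ->
  entb (set_nth 0 s k.-1 v) t = if t == k then Fin v else entb s t.
Proof.
move=> hk; rewrite /entb ent_set //; case: (eqVneq t 0) => [->|//].
by case/andP: hk; case: k.
Qed.

(* This is the shape of both halves of [Bcond] and of special symbols. *)
Fixpoint interlace (R1 R2 : rel nat) (x y : seq nat) : bool :=
  match y, x with
  | [::], _ => true
  | _ :: _, [::] => false
  | y1 :: y', x1 :: x' =>
      [&& R1 y1 x1, (if x' is x2 :: _ then R2 x2 y1 else true) & interlace R1 R2 x' y']
  end.

Lemma interlaceP (E1 E2 : ext -> ext -> bool) (R1 R2 : rel nat) x y :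
  (forall u v, E1 (Fin u) (Fin v) = R1 u v) -> (forall u, E1 (Fin u) NegInf = false) ->
  (forall u v, E2 (Fin u) (Fin v) = R2 u v) -> (forall u, E2 NegInf (Fin u) = true) ->
  (forall i, 1 <= i <= size y -> E1 (ent y i) (ent x i) && E2 (ent x i.+1) (ent y i))
  <-> interlace R1 R2 x y.
Proof.
move=> e1 e1n e2 e2n; elim: y x => [|y1 y IH] [|x1 x].
- by split => // _ [].
- by split => // _ [].
- by split => //= /(_ 1 isT); rewrite ent_nil e1n.
split.
- move=> h; have /andP [] := h 1 isT; rewrite /= e1 => -> r2 /=.
  apply/andP; split; first by case: x {IH h} r2 => [|x2 x] //=; rewrite e2.
  apply/IH => i /andP [i1 i2].
  by have := h i.+1; rewrite /= ltnS i2 => /(_ isT); rewrite !ent_cons.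
- move=> /= /and3P [r1 r2 il] [|[|i]] // /andP [_ i2].
    by rewrite /= e1 r1; case: x {IH il} r2 => [|x2 x] r2; rewrite /= ?e2n ?e2.
  by rewrite !ent_cons //; apply: (IH x).2.
Qed.

(* The convention b'_0 = +oo amounts to prepending to b a sentinel B that
   dominates every entry of c. *)
Lemma entb_sentinel (E1 E2 : ext -> ext -> bool) (R1 : rel nat) B b c :
  (forall u v, E1 (Fin u) (Fin v) = R1 u v) -> (forall u, E1 (Fin u) PosInf = true) ->
  (forall v, v \in c -> R1 v B) ->
  (forall i, 1 <= i <= size c -> E1 (ent c i) (entb b i.-1) && E2 (ent b i) (ent c i))
  <-> (forall i, 1 <= i <= size c ->
         E1 (ent c i) (ent (B :: b) i) && E2 (ent (B :: b) i.+1) (ent c i)).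
Proof.
move=> e1 e1p hB.
suff eq_i : forall i, 1 <= i <= size c ->
    E1 (ent c i) (entb b i.-1) && E2 (ent b i) (ent c i) =
    E1 (ent c i) (ent (B :: b) i) && E2 (ent (B :: b) i.+1) (ent c i).
  by split => h i hi; [rewrite -(eq_i i hi) | rewrite (eq_i i hi)]; apply: h.
move=> [|[|i]] // /andP [_ i2].
case: c => [|c1 c] // in hB i2 *.
by rewrite /entb /= !ent1 ent_cons // e1p e1 hB // mem_head.
Qed.

(* Counting form of interlacing: for thresholds p and q, the number of entries
   of x in p lies between the number of entries of y in q and one more. *)
Definition bounded (p q : pred nat) (x y : seq nat) : bool :=
  count q y <= count p x <= (count q y).+1.

Lemma count_none (p : pred nat) s : {in s, forall v, ~~ p v} -> count p s = 0.
Proof. by move=> h; rewrite (eq_in_count (a2 := pred0)) ?count_pred0 // => v /h /negbTE. Qed.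

Lemma strict_dec_geq s : strict_dec s -> sorted geq s.
Proof. by apply: sub_sorted => u v /ltnW. Qed.

Lemma strict_dec_head x s : strict_dec (x :: s) -> {in s, forall v, v < x}.
Proof. by move/(order_path_min (rev_trans ltn_trans))/allP. Qed.

Lemma strict_dec_tail x s : strict_dec (x :: s) -> strict_dec s.
Proof. exact: path_sorted. Qed.

Lemma strict_dec_nth s t : strict_dec s -> t.+1 < size s -> nth 0 s t.+1 < nth 0 s t.
Proof. by move=> /(sortedP 0) h /h. Qed.

Lemma strict_dec_uniq s : strict_dec s -> uniq s.
Proof. by apply: (sorted_uniq (rev_trans ltn_trans)) => v /=; rewrite ltnn. Qed.

Lemma geq_total : total geq.
Proof. by move=> x y; rewrite /= orbC leq_total. Qed.

Lemma geq_antisym : antisymmetric geq.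
Proof. by move=> x y; rewrite andbC; apply: anti_leq. Qed.

Lemma interlace_bounded (R1 R2 : rel nat) (p q : pred nat) x y :
  (forall u v, q u -> R1 u v -> p v) ->
  (forall u v, ~~ q u -> R2 v u -> ~~ p v) ->
  (forall u v, ~~ p u -> v <= u -> ~~ p v) ->
  sorted geq x -> interlace R1 R2 x y -> size x <= (size y).+1 -> bounded p q x y.
Proof.
rewrite /bounded => hq hnq hnp; elim: y x => [|y1 y IH] x /=.
  by move=> _ _ hs; have := count_size p x; lia.
case: x => [|x1 x] //= sx /and3P [r1 r2 il] hs.
have := IH x (path_sorted sx) il hs.
case: (boolP (q y1)) => qy; first by rewrite (hq _ _ qy r1) /=; lia.
suff -> : count p x = 0 by case: (p x1) => /=; lia.
case: x sx r2 {il hs} => [|x2 x] //= /andP [_ px] r2.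
have nx2 := hnq _ _ qy r2; rewrite (negbTE nx2) count_none // => v vx.
by apply: hnp nx2 _; have /allP := order_path_min (rev_trans leq_trans) px; apply.
Qed.

Lemma interlace_strict_bounded x y s : sorted geq x -> interlace ltn leq x y ->
  size x <= (size y).+1 -> bounded (ltn s) (leq s) x y /\ bounded (ltn s) (ltn s) x y.
Proof. by move=> sx il hs; split; apply: (interlace_bounded _ _ _ sx il hs) => u v /=; lia. Qed.

Lemma interlace_weak_bounded x y s : sorted geq x -> interlace leq ltn x y ->
  size x <= (size y).+1 -> bounded (ltn s) (ltn s) x y /\ bounded (leq s) (ltn s) x y.
Proof. by move=> sx il hs; split; apply: (interlace_bounded _ _ _ sx il hs) => u v /=; lia. Qed.

Lemma interlace_leq_bounded x y s : sorted geq x -> interlace leq leq x y ->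
  size x <= (size y).+1 -> bounded (ltn s) (ltn s) x y /\ bounded (leq s) (leq s) x y.
Proof. by move=> sx il hs; split; apply: (interlace_bounded _ _ _ sx il hs) => u v /=; lia. Qed.

Lemma bounded_interlace_strict x y : strict_dec x -> strict_dec y ->
  (forall s, bounded (ltn s) (leq s) x y) -> (forall s, bounded (ltn s) (ltn s) x y) ->
  interlace ltn leq x y.
Proof.
rewrite /bounded; elim: y x => [|y1 y IH] x sx sy h1 h2; first by case: x {sx h1 h2}.
have ay := strict_dec_head sy.
have ge1 : count (leq y1) (y1 :: y) >= 1 by rewrite /= leqnn.
have gt0 : count (ltn y1) (y1 :: y) = 0.
  by rewrite /= ltnn count_none // => v /ay /=; rewrite -leqNgt => /ltnW.
case: x sx h1 h2 => [|x1 x] sx h1 h2; first by have := h1 y1; move: ge1 => /=; lia.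
have ax := strict_dec_head sx.
have lt1 : y1 < x1.
  rewrite ltnNge; apply/negP => le1; have := h1 y1; move: ge1.
  rewrite [count (ltn y1) _]count_none; first lia.
  by move=> v; rewrite in_cons /= -leqNgt => /predU1P [->|/ax /ltnW vx] //; apply: leq_trans le1.
have hx : {in x, forall v, v <= y1}.
  case: x sx h1 h2 ax => [|x2 x] // sx h1 h2 ax.
  have le2 : x2 <= y1.
    rewrite leqNgt; apply/negP => lt2.
    by have := h2 y1; move: gt0; rewrite /= lt1 lt2 /=; lia.
  move=> v; rewrite in_cons => /predU1P [->|vx] //.
  by apply: leq_trans le2; apply: ltnW; apply: strict_dec_head (strict_dec_tail sx) _ vx.
rewrite /= lt1 /=; apply/andP; split; first by case: x {sx h1 h2 ax} hx => // x2 x /(_ x2 (mem_head _ _)).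
have zero_x s : y1 <= s -> count (ltn s) x = 0.
  by move=> hs; apply: count_none => v /hx vy; rewrite -leqNgt (leq_trans vy hs).
have zero_y s : y1 <= s -> count (leq s) y = 0 /\ count (ltn s) y = 0.
  move=> hs; split; apply: count_none => v /ay vy.
    by rewrite -ltnNge (leq_trans vy hs).
  by rewrite -leqNgt ltnW // (leq_trans vy hs).
apply: IH (strict_dec_tail sx) (strict_dec_tail sy) _ _ => s.
- case: (ltnP s y1) => hs; last by rewrite zero_x // (zero_y s hs).1.
  by have := h1 s; rewrite /= (ltnW hs) (ltn_trans hs lt1) /=; lia.
- case: (ltnP s y1) => hs; last by rewrite zero_x // (zero_y s hs).2.
  by have := h2 s; rewrite /= hs (ltn_trans hs lt1) /=; lia.
Qed.

Lemma bounded_interlace_weak x y : strict_dec x -> strict_dec y -> size y <= size x ->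
  (forall s, bounded (ltn s) (ltn s) x y) -> (forall s, bounded (leq s) (ltn s) x y) ->
  interlace leq ltn x y.
Proof.
rewrite /bounded; elim: y x => [|y1 y IH] x sx sy hs h1 h2; first by case: x {sx hs h1 h2}.
have ay := strict_dec_head sy.
have gt0 : count (ltn y1) (y1 :: y) = 0.
  by rewrite /= ltnn count_none // => v /ay /=; rewrite -leqNgt => /ltnW.
case: x sx hs h1 h2 => [|x1 x] // sx hs h1 h2.
have ax := strict_dec_head sx.
have le1 : y1 <= x1.
  rewrite leqNgt; apply/negP => lt1.
  have cx : count (ltn x1) x = 0 by apply: count_none => v /ax; rewrite -leqNgt => /ltnW.
  by have := h1 x1; rewrite /= lt1 ltnn cx; lia.
have hx : {in x, forall v, v < y1}.
  case: x sx hs h1 h2 ax => [|x2 x] // sx hs h1 h2 ax.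
  have lt2 : x2 < y1.
    rewrite ltnNge; apply/negP => le2.
    by have := h2 y1; move: gt0; rewrite /= le1 le2 /=; lia.
  move=> v; rewrite in_cons => /predU1P [->|vx] //.
  by apply: ltn_trans lt2; apply: strict_dec_head (strict_dec_tail sx) _ vx.
rewrite /= le1 /=; apply/andP; split; first by case: x {sx hs h1 h2 ax} hx => // x2 x /(_ x2 (mem_head _ _)).
have zero_x s : y1 <= s -> count (ltn s) x = 0 /\ count (leq s) x = 0.
  move=> hys; split; apply: count_none => v /hx vy.
    by rewrite -leqNgt ltnW // (leq_trans vy hys).
  by rewrite -ltnNge (leq_trans vy hys).
have zero_y s : y1 <= s -> count (ltn s) y = 0.
  by move=> hys; apply: count_none => v /ay vy; rewrite -leqNgt ltnW // (leq_trans vy hys).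
apply: IH (strict_dec_tail sx) (strict_dec_tail sy) _ _ _ => // s.
- case: (ltnP s y1) => hys; last by rewrite zero_y // (zero_x s hys).1.
  by have := h1 s; rewrite /= hys (leq_trans hys le1) /=; lia.
- case: (ltnP s y1) => hys; last by rewrite zero_y // (zero_x s hys).2.
  by have := h2 s; rewrite /= hys (leq_trans (ltnW hys) le1) /=; lia.
Qed.

Lemma moveM_count (p : pred nat) (L : symbol) M :
  count p (moveM L M).1 + count p (moveM L M).2 = count p L.1 + count p L.2.
Proof.
have split_count (s : seq nat) :
    count p [seq x <- s | x \notin M] + count p [seq x <- s | x \in M] = count p s.
  by elim: s => //= v s IH; case: (v \in M) => /=; lia.
rewrite /moveM /= !(permP (permEl (perm_sort _ _))) !count_cat.
by rewrite -(split_count L.1) -(split_count L.2) addnACA [in RHS]addnACA [X in _ = _ + X]addnC.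
Qed.

Lemma moveM_size (L : symbol) M :
  size (moveM L M).1 + size (moveM L M).2 = size L.1 + size L.2.
Proof. by rewrite -!count_predT moveM_count. Qed.

Lemma moveM_mem (L : symbol) M v :
  (v \in (moveM L M).1) || (v \in (moveM L M).2) -> (v \in L.1) || (v \in L.2).
Proof. by rewrite -!has_pred1 !has_count -!addn_gt0 moveM_count. Qed.

Lemma moveM_sorted (L : symbol) M : sorted geq (moveM L M).1 /\ sorted geq (moveM L M).2.
Proof. by split; apply: (sort_sorted geq_total). Qed.

Lemma special1_interlace a b : special1 a b -> interlace leq leq a b.
Proof.
elim: b a => [|b1 b IH] [|a1 a] [hs h] //.
have [/= h1 h2] := h 0 isT; case: a hs h h2 => [|a2 a] // [hs] h h2.
rewrite [interlace _ _ _ _]/= h1 h2; apply: (IH (a2 :: a)); split => [|i hi]; first by rewrite /= hs.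
exact: (h i.+1).
Qed.

Lemma special0_interlace c d : special0 c d -> interlace leq leq c d.
Proof.
elim: d c => [|d1 d IH] [|c1 c] [hs h] //.
have [/= h1 h2] := h 0 isT; rewrite [interlace _ _ _ _]/= h1 /=; apply/andP; split.
  by case: c {IH h} hs h2 => [|c2 c] // hs; apply.
apply: (IH c); split => [|i hi]; first by case: hs.
exact: (h i.+1).
Qed.

Lemma Bcond_interlace m m' a b c d B : {in c, forall v, v < B} ->
  Bcond m m' (a, b) (c, d) <->
  if m' == m then interlace ltn leq a d /\ interlace ltn leq (B :: b) c
  else interlace leq ltn a d /\ interlace leq ltn (B :: b) c.
Proof.
move=> hB; rewrite /Bcond; case: (m' == m).
- have il x y := @interlaceP ext_lt ext_le ltn leq x y
    ext_lt_Fin (fun=> erefl) (fun _ _ => erefl) (fun=> erefl).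
  have sn := @entb_sentinel ext_lt ext_le ltn B b c ext_lt_Fin (fun=> erefl) hB.
  by split => -[h1 h2]; split;
    [apply/(il a d) | apply/(il (B :: b) c)/sn | apply/(il a d) | apply/sn/(il (B :: b) c)].
- have il x y := @interlaceP ext_le ext_lt leq ltn x y
    (fun _ _ => erefl) (fun=> erefl) ext_lt_Fin (fun=> erefl).
  have sn := @entb_sentinel ext_le ext_lt leq B b c (fun _ _ => erefl) (fun=> erefl)
    (fun v hv => ltnW (hB v hv)).
  by split => -[h1 h2]; split;
    [apply/(il a d) | apply/(il (B :: b) c)/sn | apply/(il a d) | apply/sn/(il (B :: b) c)].
Qed.

(* The transfer of interlacing from a pair (Lambda, Lambda') of D_{Z,Z'} to
   (Z, Z'): Lambda = (a'; b') and Lambda' = (c'; d') are obtained from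
   Z = (a; b) and Z' = (c; d) by moving entries, and B is a sentinel above
   every entry. *)
Section Transfer.

Variables (a b c d a' b' c' d' : seq nat) (B : nat).
Hypotheses (sa : strict_dec a) (sb : strict_dec b) (sc : strict_dec c) (sd : strict_dec d).
Hypotheses (sa' : sorted geq a') (sb' : sorted geq b').
Hypothesis bound_B : {in a ++ b ++ c ++ d ++ b', forall v, v < B}.
Hypothesis count_ab : forall p, count p a' + count p b' = count p a + count p b.
Hypothesis count_cd : forall p, count p c' + count p d' = count p c + count p d.
Hypothesis special_ab : forall s, bounded (ltn s) (ltn s) a b /\ bounded (leq s) (leq s) a b.
Hypothesis special_cd : forall s, bounded (ltn s) (ltn s) c d /\ bounded (leq s) (leq s) c d.
Hypotheses (size_a'd' : size a' <= (size d').+1) (size_b'c' : size b' <= size c').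

(* The parity argument at one threshold: the counts on a, b (resp. c, d) have
   the same sums as on a', b' (resp. c', d') and differ by at most one, so the
   bounds relating a' to d' and b' to c' carry over to a, d and b, c. *)
Lemma transfer_bounded (p q : pred nat) :
  (forall v, v < B -> p v || q v -> p B) ->
  bounded p p a b -> bounded q q c d -> bounded p q a' d' -> bounded p q (B :: b') c' ->
  bounded p q a d /\ bounded p q (B :: b) c.
Proof.
rewrite /bounded /= => hpq.
have [pB|npB] := boolP (p B).
  by have := count_ab p; have := count_cd q; rewrite add1n; lia.
have none (r : pred nat) s : {subset s <= a ++ b ++ c ++ d ++ b'} ->
    (forall v, r v -> p v || q v) -> count r s = 0.
  move=> sub hr; apply: count_none => v /sub /bound_B vB; apply/negP => /hr rv.
  by rewrite (hpq v vB rv) in npB.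
have sub_a : {subset a <= a ++ b ++ c ++ d ++ b'} by move=> v; rewrite !mem_cat => ->.
have sub_b : {subset b <= a ++ b ++ c ++ d ++ b'} by move=> v; rewrite !mem_cat => ->; rewrite orbT.
have sub_c : {subset c <= a ++ b ++ c ++ d ++ b'} by move=> v; rewrite !mem_cat => ->; rewrite !orbT.
have sub_d : {subset d <= a ++ b ++ c ++ d ++ b'} by move=> v; rewrite !mem_cat => ->; rewrite !orbT.
by rewrite add0n (none p a) ?(none p b) ?(none q c) ?(none q d) // => v ->; rewrite ?orbT.
Qed.

Lemma sentinel_sorted : sorted geq (B :: b').
Proof.
case: b' sb' bound_B => [|v s] //= -> hB; rewrite andbT ltnW // hB //.
by rewrite !mem_cat mem_head !orbT.
Qed.

Lemma sentinel_strict : strict_dec (B :: b).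
Proof.
case: b sb bound_B => [|v s] //= -> hB; rewrite andbT hB //.
by rewrite !mem_cat mem_head !orbT.
Qed.

Lemma transfer_strict : interlace ltn leq a' d' -> interlace ltn leq (B :: b') c' ->
  interlace ltn leq a d /\ interlace ltn leq (B :: b) c.
Proof.
move=> i1 i2.
suff fams s : (bounded (ltn s) (leq s) a d /\ bounded (ltn s) (leq s) (B :: b) c) /\
              (bounded (ltn s) (ltn s) a d /\ bounded (ltn s) (ltn s) (B :: b) c).
  have sB := sentinel_strict.
  by split; apply: bounded_interlace_strict => // s; have [[? ?] [? ?]] := fams s.
have [b1 b2] := interlace_strict_bounded s sa' i1 size_a'd'.
have [b3 b4] := interlace_strict_bounded s sentinel_sorted i2 size_b'c'.
have [[sab1 _] [scd1 scd2]] := (special_ab s, special_cd s).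
by split; apply: transfer_bounded => // v vB /orP [] /= hv; clear -hv vB; lia.
Qed.

Lemma transfer_weak : size d <= size a -> size c <= (size b).+1 ->
  interlace leq ltn a' d' -> interlace leq ltn (B :: b') c' ->
  interlace leq ltn a d /\ interlace leq ltn (B :: b) c.
Proof.
move=> size_da size_cb i1 i2.
suff fams s : (bounded (ltn s) (ltn s) a d /\ bounded (ltn s) (ltn s) (B :: b) c) /\
              (bounded (leq s) (ltn s) a d /\ bounded (leq s) (ltn s) (B :: b) c).
  have sB := sentinel_strict.
  by split; apply: bounded_interlace_weak => // s; have [[? ?] [? ?]] := fams s.
have [b1 b2] := interlace_weak_bounded s sa' i1 size_a'd'.
have [b3 b4] := interlace_weak_bounded s sentinel_sorted i2 size_b'c'.
have [[sab1 sab2] [scd1 _]] := (special_ab s, special_cd s).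
by split; apply: transfer_bounded => // v vB /orP [] /= hv; clear -hv vB; lia.
Qed.

End Transfer.

Lemma Bcond_of_Dset a b c d m m' L L' :
  strict_dec a -> strict_dec b -> strict_dec c -> strict_dec d ->
  size b = m -> special1 a b -> size d = m' -> special0 c d -> (m' = m \/ m' = m.+1) ->
  Dset (a, b) (c, d) m m' L L' -> Bcond m m' (a, b) (c, d).
Proof.
move=> sa sb sc sd hb s1 hd s0 hm [[[M [_ ->]] [[N [_ ->]] [_ hL]]] [[_ def1] [_ def0]]].
have [size_a _] := s1; have [size_c _] := s0.
have sizeM := moveM_size (a, b) M; have sizeN := moveM_size (c, d) N.
have [sa' sb'] := moveM_sorted (a, b) M; have [sc' sd'] := moveM_sorted (c, d) N.
have memM := @moveM_mem (a, b) M; have memN := @moveM_mem (c, d) N.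
have count_ab p := @moveM_count p (a, b) M; have count_cd p := @moveM_count p (c, d) N.
move: (moveM (a, b) M) (moveM (c, d) N) hL def1 def0 sizeM sizeN sa' sb' sc' sd' memM memN count_ab count_cd.
move=> [a' b'] [c' d']; rewrite /defect /=.
move=> hL def1 def0 sizeM sizeN sa' sb' sc' sd' memM memN count_ab count_cd.
have [size_a' size_b'] : size a' = (size b).+1 /\ size b' = size b.
  by clear -def1 sizeM size_a; lia.
have [size_c' size_d'] : size c' = size d /\ size d' = size d.
  by clear -def0 sizeN size_c; lia.
pose B := (\max_(v <- a ++ b ++ c ++ d) v).+1.
have lt_B v : v \in a ++ b ++ c ++ d -> v < B.
  by move=> hv; rewrite ltnS; apply: leq_bigmax_seq.
have sub_b' : {subset b' <= a ++ b ++ c ++ d}.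
  by move=> v hv; move: (memM v); rewrite hv orbT => /(_ isT) /orP [] hv'; rewrite !mem_cat hv' ?orbT.
have sub_c' : {subset c' <= a ++ b ++ c ++ d}.
  by move=> v hv; move: (memN v); rewrite hv => /(_ isT) /orP [] hv'; rewrite !mem_cat hv' ?orbT.
have bound_B : {in a ++ b ++ c ++ d ++ b', forall v, v < B}.
  by move=> v; rewrite catA catA catA mem_cat -!catA => /orP [/lt_B | /sub_b' /lt_B].
have bound_c : {in c, forall v, v < B} by move=> v hv; apply: lt_B; rewrite !mem_cat hv !orbT.
have bound_c' : {in c', forall v, v < B} by move=> v /sub_c' /lt_B.
have special_ab s := interlace_leq_bounded s (strict_dec_geq sa) (special1_interlace s1) (eq_leq size_a).
have special_cd s :=
  interlace_leq_bounded s (strict_dec_geq sc) (special0_interlace s0) (leqW (eq_leq size_c)).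
apply/(Bcond_interlace _ _ _ _ _ bound_c); move/(Bcond_interlace _ _ _ _ _ bound_c'): hL.
case: hm => hm; rewrite hm ?eqxx ?(gtn_eqF (ltnSn m)) => -[i1 i2].
- move: i1 i2; apply: transfer_strict => //;
    by clear -hb hd hm size_a' size_b' size_c' size_d'; lia.
- move: i1 i2; apply: transfer_weak => //;
    by clear -hb hd hm size_a size_c size_a' size_b' size_c' size_d'; lia.
Qed.

Lemma filter_single (s M : seq nat) i : uniq s -> i < size s ->
  {in s, forall v, v \in M -> v = nth 0 s i} -> nth 0 s i \in M ->
  [seq v <- s | v \notin M] = take i s ++ drop i.+1 s /\ [seq v <- s | v \in M] = [:: nth 0 s i].
Proof.
move=> us hi hM xM; set x := nth 0 s i.
have es : s = take i s ++ x :: drop i.+1 s by rewrite -drop_nth // cat_take_drop.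
have /andP [xn _] : (x \notin take i s ++ drop i.+1 s) && uniq (take i s ++ drop i.+1 s).
  by move: us; rewrite {1}es (perm_uniq (permEl (perm_catCA _ [:: x] _))).
have out : {in take i s ++ drop i.+1 s, forall v, v \notin M}.
  move=> v hv; apply/negP => vM.
  have vs : v \in s by rewrite es mem_cat in_cons; move: hv; rewrite mem_cat => /orP [] ->; rewrite ?orbT.
  by move: xn; rewrite -[x](hM v vs vM) hv.
rewrite {1 4}es !filter_cat /= xM; split.
  by congr (_ ++ _); apply/all_filterP/allP => v hv; apply: out; rewrite mem_cat hv ?orbT.
suff nil_in (r : seq nat) : {subset r <= take i s ++ drop i.+1 s} -> [seq v <- r | v \in M] = [::].
  by rewrite !nil_in // => v hv; rewrite mem_cat hv ?orbT.
move=> sub; apply/eqP; rewrite -[_ == _]negbK -has_filter; apply/hasPn => v /sub; exact: out.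
Qed.

Lemma moveM_row (s t M : seq nat) i y : uniq s -> i < size s ->
  {in s, forall v, v \in M -> v = nth 0 s i} -> nth 0 s i \in M ->
  [seq v <- t | v \in M] = [:: y] -> sorted geq (set_nth 0 s i y) ->
  sort geq ([seq v <- s | v \notin M] ++ [seq v <- t | v \in M]) = set_nth 0 s i y.
Proof.
move=> us hi hM xM ht srt; have [-> _] := filter_single us hi hM xM.
apply: (sorted_eq (rev_trans leq_trans) geq_antisym (sort_sorted geq_total _) srt).
by rewrite perm_sort ht set_nthE hi -catA perm_cat2l cats1 perm_rcons.
Qed.

Lemma moveM_pair a b i j : strict_dec a -> strict_dec b -> i < size a -> j < size b ->
  inI (a, b) (nth 0 a i) -> inI (a, b) (nth 0 b j) ->
  sorted geq (set_nth 0 a i (nth 0 b j)) -> sorted geq (set_nth 0 b j (nth 0 a i)) ->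
  moveM (a, b) [:: nth 0 a i; nth 0 b j] = (set_nth 0 a i (nth 0 b j), set_nth 0 b j (nth 0 a i)).
Proof.
move=> sa sb hi hj ia ib s1 s2.
have ua := strict_dec_uniq sa; have ub := strict_dec_uniq sb.
have nai : nth 0 a i \notin b by move: ia; rewrite /inI /= mem_nth.
have nbj : nth 0 b j \notin a by move: ib; rewrite /inI /= mem_nth // eqb_id => /negPf ->.
have onlyA : {in a, forall v, v \in [:: nth 0 a i; nth 0 b j] -> v = nth 0 a i}.
  by move=> v va; rewrite !inE => /orP [/eqP //|/eqP ev]; move: nbj; rewrite -ev va.
have onlyB : {in b, forall v, v \in [:: nth 0 a i; nth 0 b j] -> v = nth 0 b j}.
  by move=> v vb; rewrite !inE => /orP [/eqP ev|/eqP //]; move: nai; rewrite -ev vb.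
have inA : nth 0 a i \in [:: nth 0 a i; nth 0 b j] by rewrite mem_head.
have inB : nth 0 b j \in [:: nth 0 a i; nth 0 b j] by rewrite !inE eqxx orbT.
rewrite /moveM /=; congr (_, _); apply: moveM_row => //.
- exact: (filter_single ub hj onlyB inB).2.
- exact: (filter_single ua hi onlyA inA).2.
Qed.

Lemma set_nth_sorted (s : seq nat) i v : sorted geq s -> i < size s ->
  (0 < i -> v <= nth 0 s i.-1) -> (i.+1 < size s -> nth 0 s i.+1 <= v) ->
  sorted geq (set_nth 0 s i v).
Proof.
move=> /(sortedP 0) ss hi h1 h2; apply/(sortedP 0) => t.
rewrite size_set_nth (maxn_idPr hi) => ht; rewrite !nth_set_nth /=.
case: (eqVneq t i) ht => [-> ht|_ ht]; first by rewrite (gtn_eqF (ltnSn i)); apply: h2.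
by case: (eqVneq t.+1 i) => [ei|_]; [rewrite -ei in h1; apply: h1 | apply: ss].
Qed.

(* The rows obtained by exchanging a consecutive pair a_k, b_l (l = k or
   l = k - 1) of a special symbol are still decreasing, because
   a_1 >= b_1 >= a_2 >= ... *)
Lemma swap_sorted a b k l : strict_dec a -> strict_dec b -> special1 a b ->
  1 <= l <= size b -> (l = k \/ l = k.-1) -> 1 <= k ->
  sorted geq (set_nth 0 a k.-1 (nth 0 b l.-1)) /\ sorted geq (set_nth 0 b l.-1 (nth 0 a k.-1)).
Proof.
move=> sa sb [size_a sp] /andP [l1 lb] hkl k1.
have lt_a := strict_dec_nth sa; have lt_b := strict_dec_nth sb.
have [ga gb] := (strict_dec_geq sa, strict_dec_geq sb).
have [<-|->] : l = k \/ k = l.+1 by case: hkl => ->; [left | right; lia].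
all: clear hkl k1.
all: case: l l1 lb => // j _ lb /=; have [sp1 sp2] := sp j lb; split; apply: set_nth_sorted => //.
all: rewrite ?size_a; try lia.
(* Each exchanged entry lies between its new neighbours. *)
- by move=> j0; have := lt_a j.-1; rewrite prednK // size_a; lia.
- by move=> j0; have := sp j.-1; rewrite prednK //; lia.
- by move=> hj; have := lt_b j hj; lia.
- by move=> hj; have := lt_a j.+1; rewrite size_a; lia.
- by move=> j0; have := lt_b j.-1; rewrite prednK //; lia.
- by move=> hj; have [] := sp j.+1 hj.
Qed.

Definition ext_cmp (strict : bool) (x y : ext) : bool :=
  if strict then ext_lt x y else ext_le x y.

Definition Bpoint (strict : bool) (L L' : symbol) : Prop :=
  (forall i, 1 <= i <= size L'.2 ->
     ext_cmp strict (ent L'.2 i) (ent L.1 i) && ext_cmp (~~ strict) (ent L.1 i.+1) (ent L'.2 i)) /\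
  (forall i, 1 <= i <= size L'.1 ->
     ext_cmp strict (ent L'.1 i) (entb L.2 i.-1) && ext_cmp (~~ strict) (ent L.2 i) (ent L'.1 i)).

Lemma BcondE m m' L L' : Bcond m m' L L' <-> Bpoint (m' == m) L L'.
Proof. by rewrite /Bcond /Bpoint; case: (m' == m). Qed.

Lemma ext_cmp_ent strict s i s' j :
  ext_cmp strict (ent s i) (ent s' j) = (rank (ent s i) + strict <= rank (ent s' j)).
Proof. by case: strict; rewrite /ext_cmp ?ext_lt_ent ?ext_le_ent ?addn1 ?addn0. Qed.

Lemma ext_cmp_PosInf strict s i : ext_cmp strict (ent s i) PosInf.
Proof. by case: strict; rewrite /ext_cmp ?ext_lt_ent_PosInf ?ext_le_ent_PosInf. Qed.

(* Routine closing step of the local analysis: split every case distinction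
   on indices, translate all comparisons of entries into comparisons of their
   ranks, and conclude by linear arithmetic. *)
Ltac rank_lia :=
  rewrite ?eqSS; repeat match goal with |- context[if ?b then _ else _] =>
    case: ifP => [/eqP ?|/negbT/eqP ?] end;
  try subst; rewrite ?succnK ?ext_cmp_ent ?ext_le_ent ?ext_cmp_PosInf;
  repeat match goal with
  | H : context[ent _ _] |- _ => clear H
  | H : context[entb _ _] |- _ => clear H
  | H : forall _, _ |- _ => clear H end;
  lia.

Lemma swap_Bpoint (strict : bool) a b c d k l :
  1 <= k <= size a -> 1 <= l <= size b -> (l = k \/ l = k.-1) ->
  size c = size d -> size b <= size d ->
  (forall t, ext_le (ent b t) (ent a t)) -> (forall t, 0 < t -> ext_le (ent a t.+1) (ent b t)) ->
  Bpoint strict (a, b) (c, d) ->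
  Bpoint strict (set_nth 0 a k.-1 (nth 0 b l.-1), set_nth 0 b l.-1 (nth 0 a k.-1)) (c, d) <->
  (if l == k then ext_cmp (~~ strict) (ent a k) (ent c k) && ext_cmp strict (ent d k) (ent b k)
   else ext_cmp strict (ent c k) (ent a k) && ext_cmp (~~ strict) (ent b k.-1) (ent d k.-1)).
Proof.
move=> hka hlb hkl size_cd size_bd ba ab [/= hZd hZc].
have eA t : ent (set_nth 0 a k.-1 (nth 0 b l.-1)) t = if t == k then ent b l else ent a t.
  by rewrite ent_set // (entF hlb).
have eB t : ent (set_nth 0 b l.-1 (nth 0 a k.-1)) t = if t == l then ent a k else ent b t.
  by rewrite ent_set // (entF hka).
have eBb t : entb (set_nth 0 b l.-1 (nth 0 a k.-1)) t = if t == l then ent a k else entb b t.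
  by rewrite entb_set // (entF hka).
rewrite /Bpoint /=; case: hkl => ek.
- subst k; rewrite eqxx; split.
  + case=> hd hc; have := hc l; have := hd l; rewrite size_cd !eA !eB; rank_lia.
  + move=> /andP [r1 r2]; split => t ht.
      by move: (hZd t ht) r1 r2 (ba l); rewrite !eA; rank_lia.
    case: t ht => [|t] // ht; move: (hZc t.+1 ht) r1 r2 (ba l).
    by rewrite /= !eB !eBb /entb; rank_lia.
- have {}ek : k = l.+1 by move: hka hlb; rewrite ek; lia.
  subst k; rewrite succnK in eA eB eBb.
  rewrite (ltn_eqF (ltnSn l)) /=; split.
  + case=> hd hc; case: (leqP l.+1 (size c)) => hlc.
      by have := hc l.+1; have := hd l; rewrite !eA !eB !eBb /entb; rank_lia.
    have c0 : rank (ent c l.+1) = 0 by rewrite ent_out.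
    have a1 : 0 < rank (ent a l.+1) by rewrite (entF hka).
    by move: (hd l) c0 a1; rewrite !eA; rank_lia.
  + move=> /andP [r1 r2]; split => t ht.
      by move: (hZd t ht) r1 r2 (ab l); rewrite !eA; rank_lia.
    case: t ht => [|t] // ht; move: (hZc t.+1 ht) r1 r2 (ab l).
    by rewrite /= !eB !eBb /entb; rank_lia.
Qed.

Lemma special1_ent a b : special1 a b ->
  (forall t, ext_le (ent b t) (ent a t)) /\ (forall t, 0 < t -> ext_le (ent a t.+1) (ent b t)).
Proof.
case=> size_a sp; split => [t|t t0]; case: (leqP t (size b)) => ht.
- case: t ht => [|t] ht //; rewrite !entF ?size_a /=; try lia.
  by case: (sp t ht).
- by rewrite ent_out.
- rewrite !entF ?size_a /=; try lia.
  by have := sp t.-1; rewrite prednK //; case; first lia.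
- by rewrite ent_out // size_a.
Qed.

Lemma moveM_nil (L : symbol) : sorted geq L.1 -> sorted geq L.2 -> moveM L [::] = L.
Proof.
case: L => x y /= sx sy.
have notin_nil (s : seq nat) : [seq v <- s | v \notin [::]] = s by apply/all_filterP/allP.
have in_nil (s : seq nat) : [seq v <- s | v \in [::]] = [::] by elim: s.
by rewrite /moveM /= !notin_nil !in_nil !cats0 !(sorted_sort (rev_trans leq_trans)).
Qed.

Lemma Dset_iff_Bcond (Z Z' : symbol) m m' L L' :
  Sdef Z 1 L -> Sdef Z' 0 L' -> Dset Z Z' m m' L L' <-> Bcond m m' L L'.
Proof.
move=> [SL dL] [SL' dL']; split => [[[_ [_ [_ hB]]] _] // | hB].
by do !split => //; rewrite dL dL' GRing.subrr.
Qed.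

Lemma Sdef_self c d : strict_dec c -> strict_dec d -> special0 c d -> Sdef (c, d) 0 (c, d).
Proof.
move=> sc sd [size_c _]; split; first by exists [::]; rewrite moveM_nil // strict_dec_geq.
by rewrite /defect /= size_c GRing.subrr.
Qed.

Unset Implicit Arguments.

Theorem lemma0701 (a b c d : seq nat) (m m' k l : nat) :
  strict_dec a -> strict_dec b -> strict_dec c -> strict_dec d ->
  size b = m -> special1 a b ->
  size d = m' -> special0 c d ->
  (m' = m \/ m' = m.+1) ->
  (* Psi = (a_k ; b_l) is a consecutive pair in Z_I *)
  1 <= k <= m.+1 -> 1 <= l <= m -> (l = k \/ l = k.-1) ->
  inI (a, b) (nth 0 a k.-1) -> inI (a, b) (nth 0 b l.-1) ->
  (* D_{Z,Z'} nonempty *)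
  (exists L L', Dset (a, b) (c, d) m m' L L') ->
  (Dset (a, b) (c, d) m m' (moveM (a, b) [:: nth 0 a k.-1; nth 0 b l.-1]) (c, d)
   <->
   (if m' == m then
      (if l == k then ext_le (ent a k) (ent c k) && ext_lt (ent d k) (ent b k)
       else ext_lt (ent c k) (ent a k) && ext_le (ent b k.-1) (ent d k.-1))
    else
      (if l == k then ext_lt (ent a k) (ent c k) && ext_le (ent d k) (ent b k)
       else ext_le (ent c k) (ent a k) && ext_lt (ent b k.-1) (ent d k.-1)))).
Proof.
move=> sa sb sc sd hb s1 hd s0 hm hk hl hkl ia ib [L [L' hD]].
have hZ := (BcondE _ _ _ _).1 (Bcond_of_Dset sa sb sc sd hb s1 hd s0 hm hD).
have [[size_a _] [size_c _]] := (s1, s0).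
have hka : 1 <= k <= size a by rewrite size_a hb.
have hlb : 1 <= l <= size b by rewrite hb.
have size_bd : size b <= size d by rewrite hb hd; case: hm => ->.
have [st1 st2] := swap_sorted sa sb s1 hlb hkl (proj1 (andP hka)).
have [ik jl] : k.-1 < size a /\ l.-1 < size b by clear -hka hlb; lia.
have eM := moveM_pair sa sb ik jl ia ib st1 st2.
have SL : Sdef (a, b) 1 (moveM (a, b) [:: nth 0 a k.-1; nth 0 b l.-1]).
  split; first by exists [:: nth 0 a k.-1; nth 0 b l.-1]; rewrite /= ia ib.
  by rewrite eM /defect /= !size_set_nth (maxn_idPr ik) (maxn_idPr jl) size_a subzn // subSnn.
have [ba ab] := special1_ent s1.
apply: (iff_trans (Dset_iff_Bcond _ _ SL (Sdef_self sc sd s0))); rewrite eM.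
apply: (iff_trans (BcondE _ _ _ _)).
apply: (iff_trans (swap_Bpoint hka hlb hkl size_c size_bd ba ab hZ)).
by rewrite /ext_cmp; case: (m' == m).
Qed.
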